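(* Let $F$ be a Banach lattice and $E\subset F$ a closed subspace such that every uo-null sequence in $E$ is norm-null. Then $E$ is dispersed.
   Context: A net $(x_\alpha)$ in $F$ order converges to $0$ if there is a net $(g_\beta)$ with $g_\beta\downarrow0$ such that for every $\beta$ there is $\alpha_0$ with $|x_\alpha|\le g_\beta$ for $\alpha\ge\alpha_0$; $(x_\alpha)$ is uo-null if $|x_\alpha|\wedge h$ order converges to $0$ for every $h\in F_+$. A closed subspace $E$ is dispersed if there is no sequence of unit vectors $(e_n)\subset E$ and disjoint sequence $(f_n)\subset F$ ($|f_n|\wedge|f_m|=0$, $n\ne m$) with $\|e_n-f_n\|\to0$. *)

From HB Require Import structures.
From mathcomp Require Import all_boot all_order all_algebra.
From mathcomp Require Import all_classical all_reals all_analysis.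
Set Implicit Arguments. Unset Strict Implicit. Unset Printing Implicit Defensive.
Import Order.TTheory GRing.Theory Num.Theory.
Import numFieldNormedType.Exports.
Local Open Scope classical_set_scope.
Local Open Scope ring_scope.

Section BL.
Variables (R : realType) (F : completeNormedModType R).
Variables (le : F -> F -> Prop) (join : F -> F -> F).

Definition labs (x : F) : F := join x (- x).
Definition lmeet (x y : F) : F := - join (- x) (- y).

Record banach_lattice : Prop := {
  bl_refl : forall x, le x x;
  bl_trans : forall x y z, le x y -> le y z -> le x z;
  bl_antisym : forall x y, le x y -> le y x -> x = y;
  bl_add : forall x y z, le x y -> le (x + z) (y + z);
  bl_scale : forall (a : R) x y, 0 <= a -> le x y -> le (a *: x) (a *: y);
  bl_join_l : forall x y, le x (join x y);
  bl_join_r : forall x y, le y (join x y);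
  bl_join_lub : forall x y z, le x z -> le y z -> le (join x y) z;
  bl_norm : forall x y, le (labs x) (labs y) -> `|x| <= `|y|
}.

Definition directed (B : Type) (leB : B -> B -> Prop) : Prop :=
  (forall b, leB b b) /\ (forall a b c, leB a b -> leB b c -> leB a c) /\
  inhabited B /\ (forall a b, exists c, leB a c /\ leB b c).

Definition net_decr_to0 (B : Type) (leB : B -> B -> Prop) (g : B -> F) : Prop :=
  (forall b b', leB b b' -> le (g b') (g b)) /\
  (forall b, le 0 (g b)) /\
  (forall h, (forall b, le h (g b)) -> le h 0).

Definition order_null (A : Type) (leA : A -> A -> Prop) (x : A -> F) : Prop :=
  exists (B : Type) (leB : B -> B -> Prop) (g : B -> F),
    directed leB /\ net_decr_to0 leB g /\
    forall b, exists a0, forall a, leA a0 a -> le (labs (x a)) (g b).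

Definition uo_null (A : Type) (leA : A -> A -> Prop) (x : A -> F) : Prop :=
  forall h, le 0 h -> order_null leA (fun a => lmeet (labs (x a)) h).

Definition uo_null_seq (x : nat -> F) : Prop := uo_null (fun m n => (m <= n)%N) x.

Definition disjoint_seq (f : nat -> F) : Prop :=
  forall n m, n <> m -> lmeet (labs (f n)) (labs (f m)) = 0.

Definition closed_subspace (E : set F) : Prop :=
  closed E /\ E 0 /\ (forall x y, E x -> E y -> E (x + y)) /\
  (forall (a : R) x, E x -> E (a *: x)).

Definition dispersed (E : set F) : Prop :=
  ~ exists (e f : nat -> F),
      (forall n, E (e n)) /\ (forall n, `|e n| = 1) /\ disjoint_seq f /\
      (fun n => `|e n - f n|) @ \oo --> (0 : R).

End BL.

From mathcomp Require Import all_boot all_order all_algebra.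
From mathcomp Require Import all_classical all_reals all_analysis.
Import Order.TTheory GRing.Theory Num.Theory.
Import numFieldNormedType.Exports.
Local Open Scope classical_set_scope.
Local Open Scope ring_scope.
Set Implicit Arguments. Unset Strict Implicit.

(* Suppose unit vectors e_n of E satisfy ||e_n - f_n|| -> 0 with (f_n) disjoint.
   Along a subsequence, sum_n 2^n ||e_n - f_n|| < oo, and we show that (e_n) is
   then uo-null, which contradicts ||e_n|| = 1. Fix h >= 0. Then
   |e_n| /\ h <= a_n + x_n, where x_n = |f_n| /\ h is disjoint and bounded by h,
   and a_n = |e_n - f_n| /\ h satisfies 2^n a_n <= U for the sum U of the
   norm-convergent series sum_n 2^n a_n. As F need not be Dedekind complete, the
   dominating net is the set of all positive eventual upper bounds of
   |e_n| /\ h, directed downwards by /\. A lower bound w of this net satisfies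
   w <= 2^-k U for every k, because (w - 2^-k U)^+ lies below every positive
   eventual upper bound of the disjoint sequence (x_n), and such an element
   vanishes. Hence w^+ = 0. *)

Lemma natmul_bounded_eq0 (R : archiRealFieldType) (r c : R) :
  0 <= r -> (forall k : nat, k%:R * r <= c) -> r = 0.
Proof.
rewrite le0r => /orP[/eqP //|r_gt0] bounded; exfalso.
have := bounded (Num.truncn (c / r)).+1; rewrite -ler_pdivlMr // => le_trunc.
by have := lt_le_trans (Num.Theory.truncnS_gt (c / r)) le_trunc; rewrite ltxx.
Qed.

Section VectorLattice.
Variables (R : realType) (F : completeNormedModType R).
Variables (le : F -> F -> Prop) (join : F -> F -> F).
Hypothesis BL : banach_lattice le join.
Local Notation "x <=: y" := (le x y) (at level 70).
Local Notation labs := (@labs R F join).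
Local Notation lmeet := (@lmeet R F join).

Let lle_refl := bl_refl BL.
Let lle_trans := bl_trans BL.
Let lle_anti := bl_antisym BL.
Let lleD2r := bl_add BL.
Let lle_joinl := bl_join_l BL.
Let lle_joinr := bl_join_r BL.
Let ljoin_lub := bl_join_lub BL.

Lemma lleD2l x y z : x <=: y -> z + x <=: z + y.
Proof. by move=> le_xy; rewrite ![z + _]addrC; apply: lleD2r. Qed.

Lemma lleD x y x' y' : x <=: y -> x' <=: y' -> x + x' <=: y + y'.
Proof.
by move=> le_xy le_xy'; apply: lle_trans (lleD2r x' le_xy) (lleD2l y le_xy').
Qed.

Lemma laddr_ge0 p q : 0 <=: p -> 0 <=: q -> 0 <=: p + q.
Proof. by move=> p_ge0 q_ge0; have := lleD p_ge0 q_ge0; rewrite addr0. Qed.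

Lemma lscale_ge0 (a : R) p : 0 <= a -> 0 <=: p -> 0 <=: a *: p.
Proof. by move=> a_ge0 /(bl_scale BL a_ge0); rewrite scaler0. Qed.

Lemma lle_subr_ge0 x y : 0 <=: y - x <-> x <=: y.
Proof.
split=> [|le_xy]; first by move/(lleD2r x); rewrite add0r subrK.
by have := lleD2r (- x) le_xy; rewrite subrr.
Qed.

Lemma lleN2 x y : - y <=: - x <-> x <=: y.
Proof.
suff lleN x' y' : x' <=: y' -> - y' <=: - x' by split=> /lleN; rewrite ?opprK.
by move/(lleD2r (- x' - y')); rewrite addrA subrr add0r addrCA subrr addr0.
Qed.

Lemma lle_oppr0 p : 0 <=: p -> - p <=: 0.
Proof. by move=> p_ge0; apply/lleN2; rewrite oppr0 opprK. Qed.

Lemma ljoinC x y : join x y = join y x.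
Proof. by apply: lle_anti; apply: ljoin_lub. Qed.

Lemma ljoinDr x y z : join (x + z) (y + z) = join x y + z.
Proof.
apply: lle_anti.
  by apply: ljoin_lub; apply: lleD2r; [apply: lle_joinl|apply: lle_joinr].
suff le_sub : join x y <=: join (x + z) (y + z) - z.
  by have := lleD2r z le_sub; rewrite subrK.
apply: ljoin_lub; rewrite -[X in X <=: _](addrK z); apply: lleD2r;
  [apply: lle_joinl|apply: lle_joinr].
Qed.

Lemma lmeet_l x y : lmeet x y <=: x.
Proof. by apply/lleN2; rewrite opprK; apply: lle_joinl. Qed.

Lemma lmeet_r x y : lmeet x y <=: y.
Proof. by apply/lleN2; rewrite opprK; apply: lle_joinr. Qed.

Lemma lmeet_glb z x y : z <=: x -> z <=: y -> z <=: lmeet x y.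
Proof.
by move=> le_zx le_zy; apply/lleN2; rewrite opprK; apply: ljoin_lub; apply/lleN2.
Qed.

Lemma lmeetC x y : lmeet x y = lmeet y x.
Proof. by rewrite /lmeet ljoinC. Qed.

Lemma lmeet_ge0 p q : 0 <=: p -> 0 <=: q -> 0 <=: lmeet p q.
Proof. exact: lmeet_glb. Qed.

Lemma lmeetx0 p : 0 <=: p -> lmeet p 0 = 0.
Proof. by move=> p_ge0; apply: lle_anti; [apply: lmeet_r|apply: lmeet_ge0]. Qed.

Lemma lmeet_homor p a b : a <=: b -> lmeet p a <=: lmeet p b.
Proof.
by move=> le_ab; apply: lmeet_glb; [apply: lmeet_l|apply: lle_trans (lmeet_r _ _) le_ab].
Qed.

Lemma lmeet_homol p a b : a <=: b -> lmeet a p <=: lmeet b p.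
Proof. by rewrite ![lmeet _ p]lmeetC; apply: lmeet_homor. Qed.

Lemma laddE_join_meet x y : x + y = join x y + lmeet x y.
Proof.
have := ljoinDr (- x) (- y) (x + y).
have -> : - x + (x + y) = y by rewrite addKr.
have -> : - y + (x + y) = x by rewrite addrC addrK.
rewrite ljoinC => join_eq.
by rewrite /lmeet join_eq (addrC (join _ _)) addrK.
Qed.

Lemma lmeet_subaddr p q r : 0 <=: p -> 0 <=: q -> 0 <=: r ->
  lmeet p (q + r) <=: lmeet p q + lmeet p r.
Proof.
move=> p_ge0 q_ge0 r_ge0; set s := lmeet p (q + r).
suff : s - lmeet p q <=: lmeet p r by move/(lleD2r (lmeet p q)); rewrite subrK addrC.
have -> : s - lmeet p q = join (- p + s) (- q + s).
  by rewrite /lmeet opprK addrC -ljoinDr.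
apply: ljoin_lub.
  apply: lle_trans (lmeet_ge0 p_ge0 r_ge0).
  by have := lleD2l (- p) (lmeet_l p (q + r)); rewrite addNr.
apply: lmeet_glb.
  apply: lle_trans (lmeet_l p (q + r)); rewrite addrC.
  by have := lleD2l s (lle_oppr0 q_ge0); rewrite addr0.
by have := lleD2l (- q) (lmeet_r p (q + r)); rewrite addKr.
Qed.

Lemma lmeet_subaddl p q r : 0 <=: p -> 0 <=: q -> 0 <=: r ->
  lmeet (q + r) p <=: lmeet q p + lmeet r p.
Proof. by rewrite !(lmeetC _ p); apply: lmeet_subaddr. Qed.

Lemma labs_ge x : x <=: labs x. Proof. exact: lle_joinl. Qed.

Lemma labs_geN x : - x <=: labs x. Proof. exact: lle_joinr. Qed.

Lemma labs_ge0 x : 0 <=: labs x.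
Proof.
have := lleD (labs_ge x) (labs_geN x); rewrite subrr -mulr2n -scaler_nat.
have half_ge0 : (0 : R) <= 2^-1 by rewrite invr_ge0.
by move/(bl_scale BL half_ge0); rewrite scaler0 scalerA mulVf ?scale1r.
Qed.

Lemma ger0_labs p : 0 <=: p -> labs p = p.
Proof.
move=> p_ge0; apply: lle_anti; last exact: labs_ge.
by apply: ljoin_lub; [apply: lle_refl|apply: lle_trans (lle_oppr0 p_ge0) p_ge0].
Qed.

Lemma labsD x y : labs (x + y) <=: labs x + labs y.
Proof.
apply: ljoin_lub; first by apply: lleD; apply: labs_ge.
by rewrite opprD; apply: lleD; apply: labs_geN.
Qed.

Lemma ler_lnorm p q : 0 <=: p -> p <=: q -> `|p| <= `|q|.
Proof.
move=> p_ge0 le_pq; apply: (bl_norm BL).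
by rewrite !ger0_labs //; apply: lle_trans le_pq.
Qed.

Lemma lle_mulrn_ge0 p k : 0 <=: p -> 0 <=: p *+ k.
Proof.
move=> p_ge0; elim: k => [|k IHk]; first by rewrite mulr0n.
by rewrite mulrS; apply: laddr_ge0.
Qed.

Lemma lmulrn_bounded_eq0 p h : 0 <=: p -> (forall k, p *+ k <=: h) -> p = 0.
Proof.
move=> p_ge0 bounded; apply/normr0_eq0.
apply: (natmul_bounded_eq0 (c := `|h|) (normr_ge0 _)) => k.
by rewrite mulr_natl -normrMn; apply: ler_lnorm (lle_mulrn_ge0 k p_ge0) _.
Qed.

Lemma ldisjointD p q r : 0 <=: p -> 0 <=: q -> 0 <=: r ->
  lmeet p q = 0 -> lmeet p r = 0 -> lmeet p (q + r) = 0.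
Proof.
move=> p_ge0 q_ge0 r_ge0 pq0 pr0; apply: lle_anti.
  by have := lmeet_subaddr p_ge0 q_ge0 r_ge0; rewrite pq0 pr0 addr0.
by apply: lmeet_ge0 => //; apply: laddr_ge0.
Qed.

Lemma ldisjointW p q d : 0 <=: p -> 0 <=: d -> d <=: q ->
  lmeet p q = 0 -> lmeet p d = 0.
Proof.
move=> p_ge0 d_ge0 le_dq pq0; apply: lle_anti; last exact: lmeet_ge0.
by rewrite -pq0; apply: lmeet_homor.
Qed.

Lemma ldisjoint_addE p q : lmeet p q = 0 -> p + q = join p q.
Proof. by move=> pq0; rewrite laddE_join_meet pq0 addr0. Qed.

Lemma lle_cvg (s : nat -> F) c l : s @ \oo --> l ->
  (\forall n \near \oo, c <=: s n) -> c <=: l.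
Proof.
move=> s_l c_le; set t := l - c; set neg := join (- t) 0.
have neg_le n : c <=: s n -> `|neg| <= `|s n - l|.
  move=> le_cs; apply: (bl_norm BL); rewrite ger0_labs; last exact: lle_joinr.
  apply: ljoin_lub; last exact: labs_ge0.
  apply: lle_trans (labs_ge _); apply/lle_subr_ge0.
  by rewrite /t opprK addrA subrK; apply/lle_subr_ge0.
have neg0 : neg = 0.
  apply/eqP; rewrite -normr_le0; apply/ler_addgt0Pr => e e_gt0.
  near \oo => n.
  have le_neg : `|neg| <= `|s n - l| by apply: neg_le; near: n.
  apply: le_trans le_neg _; rewrite add0r distrC ltW //; near: n.
  exact: cvgr_dist_lt.
have : lmeet t 0 = 0 by rewrite /lmeet oppr0 -/neg neg0 oppr0.
move/ldisjoint_addE; rewrite addr0 => t_join.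
by apply/lle_subr_ge0; rewrite -/t t_join; apply: lle_joinr.
Unshelve. all: by end_near.
Qed.

Lemma lle_sum_term (t : nat -> F) m n : (forall k, 0 <=: t k) -> (n < m)%N ->
  t n <=: \sum_(0 <= k < m) t k.
Proof.
move=> t_ge0 lt_nm; rewrite (bigD1_seq n) ?mem_index_iota ?iota_uniq //=.
rewrite -[X in X <=: _]addr0; apply: lleD2l.
by apply: big_ind => [|x y|k _]; [exact: lle_refl|exact: laddr_ge0|exact: t_ge0].
Qed.

Lemma lle_series_lim (t : nat -> F) U : (forall k, 0 <=: t k) ->
  series t @ \oo --> U -> forall n, t n <=: U.
Proof.
move=> t_ge0 t_U n; apply: (lle_cvg t_U); near=> m.
by apply: lle_sum_term => //; near: m; exists n.+1.
Unshelve. all: by end_near.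
Qed.

Definition eventual_ub (y : nat -> F) (u : F) : Prop :=
  0 <=: u /\ exists k, forall n, (k <= n)%N -> y n <=: u.

Section DisjointTail.
Variables (x : nat -> F) (h z : F).
Hypotheses (x_ge0 : forall n, 0 <=: x n) (x_le_h : forall n, x n <=: h).
Hypothesis x_disjoint : forall i j, i <> j -> lmeet (x i) (x j) = 0.
Hypotheses (z_ge0 : 0 <=: z) (z_lb : forall u, eventual_ub x u -> z <=: u).

Lemma lleD_tail_disjoint k q : 0 <=: q -> q <=: h ->
  (forall n, (k <= n)%N -> lmeet (x n) q = 0) -> z + q <=: h.
Proof.
move=> q_ge0 q_le_h q_disj.
suff : z <=: h - q by move/(lleD2r q); rewrite subrK.
apply: z_lb; split; first exact/lle_subr_ge0.
exists k => n le_kn.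
have : x n + q <=: h by rewrite ldisjoint_addE ?q_disj //; apply: ljoin_lub.
by move/(lleD2r (- q)); rewrite addrK.
Qed.

Lemma lmeet_term_eq0 j : lmeet z (x j) = 0.
Proof.
(* [x j + d *+ m] is disjoint from the tail of [x], so [z + x j + d *+ m <= h]
   for every [m]. *)
set d := lmeet z (x j).
have d_ge0 : 0 <=: d by apply: lmeet_ge0.
have tail_disj m n : (j < n)%N -> lmeet (x n) (x j + d *+ m) = 0.
  move=> lt_jn; have neq_nj : n <> j by move=> eq_nj; rewrite eq_nj ltnn in lt_jn.
  apply: ldisjointD => //; [exact: lle_mulrn_ge0|exact: x_disjoint|].
  elim: m => [|m IHm]; first by rewrite mulr0n lmeetx0.
  rewrite mulrS; apply: ldisjointD => //; first exact: lle_mulrn_ge0.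
  exact: ldisjointW (lmeet_r _ _) (x_disjoint neq_nj).
have le_h m : z + (x j + d *+ m) <=: h.
  elim: m => [|m IHm].
    apply: (lleD_tail_disjoint (k := j.+1)) (tail_disj 0%N); rewrite mulr0n addr0.
      exact: x_ge0.
    exact: x_le_h.
  apply: (lleD_tail_disjoint (k := j.+1)) (tail_disj m.+1) => //.
    by apply: laddr_ge0; [exact: x_ge0|exact: lle_mulrn_ge0].
  by apply: lle_trans IHm; rewrite mulrS addrCA; apply: lleD2r; apply: lmeet_l.
apply: (lmulrn_bounded_eq0 d_ge0) => m; apply: lle_trans (le_h m).
rewrite addrA -[X in X <=: _]add0r; apply: lleD2r.
exact: laddr_ge0 z_ge0 (x_ge0 j).
Qed.

Lemma disjoint_tail_glb_eq0 : z = 0.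
Proof.
have disj_z n k : lmeet (x n) (z *+ k) = 0.
  elim: k => [|k IHk]; first by rewrite mulr0n lmeetx0.
  rewrite mulrS; apply: ldisjointD => //; first exact: lle_mulrn_ge0.
  by rewrite lmeetC lmeet_term_eq0.
apply: (lmulrn_bounded_eq0 z_ge0 (h := h)); elim=> [|k IHk].
  by rewrite mulr0n; apply: lle_trans (x_le_h 0%N).
rewrite mulrS; apply: (lleD_tail_disjoint (k := 0%N)) => //.
exact: lle_mulrn_ge0.
Qed.

End DisjointTail.

Lemma order_null_eventual_ub (y : nat -> F) :
  (forall n, 0 <=: y n) -> (exists u, eventual_ub y u) ->
  (forall w, (forall u, eventual_ub y u -> w <=: u) -> w <=: 0) ->
  order_null le join (fun m n : nat => (m <= n)%N) y.
Proof.
move=> y_ge0 [u0 y_u0] glb_le0.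
exists {u | eventual_ub y u}, (fun u v => sval v <=: sval u), sval.
split; [|split; [split; [|split]|]].
- split; first by move=> u; apply: lle_refl.
  split; first by move=> u v w le_vu le_wv; apply: lle_trans le_wv le_vu.
  split; first exact: (inhabits (exist _ u0 y_u0)).
  move=> [u [u_ge0 [ku y_u]]] [v [v_ge0 [kv y_v]]].
  have y_meet : eventual_ub y (lmeet u v).
    split; first exact: lmeet_ge0.
    exists (maxn ku kv) => n; rewrite geq_max => /andP[le_kun le_kvn].
    by apply: lmeet_glb; [apply: y_u|apply: y_v].
  by exists (exist _ _ y_meet); split; [apply: lmeet_l|apply: lmeet_r].
- by move=> u v.
- by move=> u; case: (svalP u).
- by move=> w w_lb; apply: glb_le0 => u y_u; apply: (w_lb (exist _ u y_u)).
- move=> u; have [_ [k y_u]] := svalP u.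
  by exists k => n le_kn; rewrite ger0_labs; [apply: y_u|apply: y_ge0].
Qed.

Lemma eventual_ub_glb_le (y a x : nat -> F) h c w :
  (forall n, 0 <=: x n) -> (forall n, x n <=: h) ->
  (forall i j, i <> j -> lmeet (x i) (x j) = 0) ->
  (forall n, y n <=: a n + x n) ->
  0 <=: c -> (exists k, forall n, (k <= n)%N -> a n <=: c) ->
  (forall u, eventual_ub y u -> w <=: u) -> w <=: c.
Proof.
move=> x_ge0 x_le_h x_disjoint y_le c_ge0 [ka a_le_c] w_lb.
set z := join (w - c) 0.
suff z0 : z = 0.
  by have := lle_joinl (w - c) 0; rewrite -/z z0 => /(lleD2r c); rewrite subrK add0r.
apply: (disjoint_tail_glb_eq0 x_ge0 x_le_h x_disjoint (lle_joinr _ _)).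
move=> v [v_ge0 [kv x_le_v]]; apply: ljoin_lub => //.
have y_ub : eventual_ub y (c + v).
  split; first exact: laddr_ge0.
  exists (maxn ka kv) => n; rewrite geq_max => /andP[le_kan le_kvn].
  by apply: lle_trans (y_le n) _; apply: lleD; [apply: a_le_c|apply: x_le_v].
by move/(lleD2r (- c)): (w_lb _ y_ub); rewrite (addrC c v) addrK.
Qed.

Lemma lle_geometric_tail (a : nat -> F) U k n : 0 <=: U ->
  (forall n, (2 ^+ n : R) *: a n <=: U) -> (k <= n)%N -> a n <=: (2 ^+ k)^-1 *: U.
Proof.
move=> U_ge0 a_le le_kn.
have inv_ge0 m : (0 : R) <= (2 ^+ m)^-1 by rewrite invr_ge0 exprn_ge0.
have -> : a n = (2 ^+ n)^-1 *: ((2 ^+ n : R) *: a n).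
  by rewrite scalerA mulVf ?scale1r // expf_neq0.
apply: lle_trans (bl_scale BL (inv_ge0 n) (a_le n)) _.
apply/lle_subr_ge0; rewrite -scalerBl.
apply: lscale_ge0 U_ge0.
by rewrite subr_ge0 lef_pV2 ?posrE ?exprn_gt0 // ler_eXn2l // ltr1n.
Qed.

Lemma lle_geometric_le0 w U : 0 <=: U ->
  (forall k, w <=: (2 ^+ k : R)^-1 *: U) -> w <=: 0.
Proof.
move=> U_ge0 w_le; set wp := join w 0.
suff wp0 : wp = 0 by rewrite -wp0; apply: lle_joinl.
have wp_le k : `|wp| <= (2 ^+ k)^-1 * `|U|.
  rewrite -[(2 ^+ k)^-1]ger0_norm // -normrZ; apply: ler_lnorm; first exact: lle_joinr.
  by apply: ljoin_lub; [exact: w_le|exact: lscale_ge0].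
apply/normr0_eq0; apply: (natmul_bounded_eq0 (c := `|U|) (normr_ge0 _)) => k.
have le_k2 : (k%:R : R) <= 2 ^+ k by rewrite -natrX ler_nat ltnW // ltn_expl.
apply: le_trans (ler_wpM2r (normr_ge0 _) le_k2) _.
by rewrite -ler_pdivlMl ?exprn_gt0.
Qed.

Lemma order_null_dominated (y a x : nat -> F) h U :
  (forall n, 0 <=: y n) -> (forall n, y n <=: h) ->
  (forall n, 0 <=: a n) -> (forall n, (2 ^+ n : R) *: a n <=: U) ->
  (forall n, 0 <=: x n) -> (forall n, x n <=: h) ->
  (forall i j, i <> j -> lmeet (x i) (x j) = 0) ->
  (forall n, y n <=: a n + x n) ->
  order_null le join (fun m n : nat => (m <= n)%N) y.
Proof.
move=> y_ge0 y_le_h a_ge0 a_le x_ge0 x_le_h x_disjoint y_le.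
have U_ge0 : 0 <=: U by apply: lle_trans (a_le 0%N); rewrite expr0 scale1r.
apply: order_null_eventual_ub => //.
  exists h; split; last by exists 0%N.
  exact: lle_trans (y_le_h 0%N).
move=> w w_lb; apply: (lle_geometric_le0 U_ge0) => k.
apply: (eventual_ub_glb_le x_ge0 x_le_h x_disjoint y_le _ _ w_lb).
  by apply: lscale_ge0 U_ge0; rewrite invr_ge0 exprn_ge0.
by exists k => n; apply: lle_geometric_tail.
Qed.

Lemma uo_null_near_disjoint (e f : nat -> F) : disjoint_seq join f ->
  cvgn (series (fun n => 2 ^+ n * `|e n - f n|)) -> uo_null_seq le join e.
Proof.
move=> f_disjoint summable h h_ge0.
pose a n := lmeet (labs (e n - f n)) h.
pose x n := lmeet (labs (f n)) h.
pose t n := (2 ^+ n : R) *: a n.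
have a_ge0 n : 0 <=: a n by apply: lmeet_ge0 => //; apply: labs_ge0.
have x_ge0 n : 0 <=: x n by apply: lmeet_ge0 => //; apply: labs_ge0.
have t_ge0 n : 0 <=: t n by apply: lscale_ge0; rewrite ?exprn_ge0.
have t_cvg : cvgn (series t).
  apply: normed_cvg; apply: (series_le_cvg _ _ _ summable) => n.
  - exact: normr_ge0.
  - by rewrite mulr_ge0 ?exprn_ge0.
  rewrite /= normrZ ger0_norm ?exprn_ge0 // ler_wpM2l ?exprn_ge0 //.
  by apply: (bl_norm BL); rewrite ger0_labs //; apply: lmeet_l.
have [U t_U] := (cvg_ex _).1 t_cvg.
apply: (order_null_dominated (a := a) (x := x) (U := U) (h := h)) => //.
- by move=> n; apply: lmeet_ge0 => //; apply: labs_ge0.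
- by move=> n; apply: lmeet_r.
- exact: lle_series_lim t_U.
- by move=> n; apply: lmeet_r.
- move=> i j neq_ij; apply: lle_anti; last exact: lmeet_ge0.
  rewrite -(f_disjoint i j neq_ij).
  by apply: lmeet_glb; apply: lle_trans (lmeet_l _ _); [apply: lmeet_l|apply: lmeet_r].
- move=> n; apply: lle_trans (lmeet_subaddl h_ge0 (labs_ge0 _) (labs_ge0 _)).
  by apply: lmeet_homol; rewrite -{1}(subrK (f n) (e n)); apply: labsD.
Qed.

End VectorLattice.

Lemma cvg0_subseq_lt (R : realType) (u w : R ^nat) : u @ \oo --> 0 ->
  (forall n, 0 < w n) ->
  exists phi : nat -> nat, (forall n, (phi n < phi n.+1)%N) /\ forall n, `|u (phi n)| < w n.
Proof.
move=> u_0 w_gt0.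
have u_eventually k : exists N, forall m, (N <= m)%N -> `|u m| < w k.
  have [N _ u_near] := cvgr_dist_lt _ _ u_0 _ (w_gt0 k).
  by exists N => m le_Nm; have := u_near m le_Nm; rewrite /= sub0r normrN.
have [N u_lt] := choice u_eventually.
pose fix phi n := if n is n'.+1 then maxn (N n) (phi n').+1 else N 0%N.
exists phi; split=> [n|n]; first by rewrite /= leq_max ltnSn orbT.
by apply: u_lt; case: n => [|n] //=; rewrite leq_max leqnn.
Qed.

Theorem mainTheorem19 (R : realType) (F : completeNormedModType R)
  (le : F -> F -> Prop) (join : F -> F -> F) (E : set F) :
  @banach_lattice R F le join ->
  closed_subspace E ->
  (forall x : nat -> F, (forall n, E (x n)) -> @uo_null_seq R F le join x ->
     x @ \oo --> (0 : F)) ->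
  @dispersed R F join E.
Proof.
move=> BL _ null_of_uo [e [f [e_in_E [e_norm [f_disjoint ef_0]]]]].
pose w n : R := (2^-1) ^+ n / 2 ^+ n.
have w_gt0 n : 0 < w n by rewrite divr_gt0 ?exprn_gt0 ?invr_gt0.
have [phi [phiS ef_phi]] := cvg0_subseq_lt ef_0 w_gt0.
have phi_inj : injective phi by apply/increasing_seq_injective/increasing_seqP.
have uo : uo_null_seq le join (e \o phi).
  apply: (uo_null_near_disjoint BL (f := f \o phi)).
    by move=> m n neq_mn; apply: f_disjoint => /phi_inj.
  apply: (series_le_cvg (v_ := geometric 1 2^-1)) => n.
  - by rewrite mulr_ge0 ?exprn_ge0.
  - by rewrite /= mul1r exprn_ge0 // invr_ge0.
  - have -> : geometric 1 2^-1 n = 2 ^+ n * w n.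
      by rewrite /= mul1r /w mulrCA divff ?mulr1 // expf_neq0.
    by rewrite ler_wpM2l ?exprn_ge0 // ltW //; have := ef_phi n; rewrite normr_id.
  - by apply: is_cvg_geometric_series; rewrite ger0_norm ?invr_ge0 // invf_lt1 // ltr1n.
have e_0 := null_of_uo _ (fun n => e_in_E (phi n)) uo.
near \oo => n.
have : `|0 - e (phi n)| < 1 by near: n; apply: cvgr_dist_lt.
by rewrite sub0r normrN e_norm ltxx.
Unshelve. all: by end_near.
Qed.
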